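(* Let $\mathcal{A}$ be a commutative unital $C^*$-algebra and let $F\in B^a(H_{\mathcal{A}})$ be self-adjoint. Then $\sigma_p^{\mathcal{A}}(F)$ is a self-adjoint subset of $\mathcal{A}$, i.e. $\alpha\in\sigma_p^{\mathcal{A}}(F)$ if and only if $\alpha^*\in\sigma_p^{\mathcal{A}}(F)$.
   Context: $H_{\mathcal{A}}=l_2(\mathcal{A})$ is the standard Hilbert $C^*$-module of sequences $(x_1,x_2,\dots)$ in $\mathcal{A}$ with $\sum_k x_k^*x_k$ norm-convergent, inner product $\langle x,y\rangle=\sum_k x_k^*y_k$. $B^a(H_{\mathcal{A}})$ denotes the bounded adjointable $\mathcal{A}$-linear operators on $H_{\mathcal{A}}$. For $\alpha\in\mathcal{A}$, $\alpha I$ is the operator $(x_k)\mapsto(\alpha x_k)$. $\sigma_p^{\mathcal{A}}(F)=\{\alpha\in\mathcal{A}\mid\ker(F-\alpha I)\ne\{0\}\}$. *)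

From mathcomp Require Import all_boot all_order all_algebra.
From mathcomp Require Import complex.
From mathcomp Require Import reals.
From Stdlib Require Import ClassicalEpsilon.

Set Implicit Arguments.
Unset Strict Implicit.
Unset Printing Implicit Defensive.

Import Order.TTheory GRing.Theory Num.Theory.
Local Open Scope ring_scope.

(* A commutative unital complex algebra is a comAlgType R[i]; the C*-structure
   (norm, involution) is given by explicit data [nrm] and [star] subject to
   the axioms in [is_CStar]. *)

Section CStar.
Variables (R : realType) (A : comAlgType R[i]).
Variables (nrm : A -> R) (star : A -> A).

Definition conv (u : nat -> A) (l : A) : Prop :=
  forall eps : R, 0 < eps -> exists N : nat, forall n : nat, (N <= n)%N ->
    nrm (u n - l) < eps.

Definition cauchy (u : nat -> A) : Prop :=
  forall eps : R, 0 < eps -> exists N : nat, forall m n : nat,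
    (N <= m)%N -> (N <= n)%N -> nrm (u m - u n) < eps.

Record is_CStar : Prop := {
  nrm_ge0 : forall x, 0 <= nrm x;
  nrm_eq0 : forall x, nrm x = 0 -> x = 0;
  nrm_triangle : forall x y, nrm (x + y) <= nrm x + nrm y;
  nrm_scale : forall (c : R[i]) x, nrm (c *: x) = @Normc.normc R c * nrm x;
  nrm_submul : forall x y, nrm (x * y) <= nrm x * nrm y;
  nrm_complete : forall u, cauchy u -> exists l, conv u l;
  star_add : forall x y, star (x + y) = star x + star y;
  star_scale : forall (c : R[i]) x, star (c *: x) = (conjc c) *: star x;
  star_mul : forall x y, star (x * y) = star y * star x;
  star_invol : forall x, star (star x) = x;
  cstar_identity : forall x, nrm (star x * x) = nrm x ^+ 2
}.

Definition is_l2 (x : nat -> A) : Prop :=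
  exists s : A, conv (fun n => \sum_(k < n) star (x k) * x k) s.

Definition ip (x y : nat -> A) : A :=
  epsilon (inhabits 0)
    (fun s => conv (fun n => \sum_(k < n) star (x k) * y k) s).

Definition is_Ba (F : (nat -> A) -> (nat -> A)) : Prop :=
  [/\ (forall x, is_l2 x -> is_l2 (F x)),
      (forall x y, is_l2 x -> is_l2 y ->
          F (fun k => x k + y k) = (fun k => F x k + F y k)),
      (forall x (a : A), is_l2 x ->
          F (fun k => x k * a) = (fun k => F x k * a)),
      (exists M : R, forall x, is_l2 x -> nrm (ip (F x) (F x)) <= M * nrm (ip x x))
    & (exists G : (nat -> A) -> (nat -> A),
          (forall y, is_l2 y -> is_l2 (G y)) /\
          (forall x y, is_l2 x -> is_l2 y -> ip (F x) y = ip x (G y)))].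

Definition is_selfadjoint (F : (nat -> A) -> (nat -> A)) : Prop :=
  forall x y, is_l2 x -> is_l2 y -> ip (F x) y = ip x (F y).

Definition in_sigma_p (F : (nat -> A) -> (nat -> A)) (alpha : A) : Prop :=
  exists x : nat -> A, [/\ is_l2 x, x <> (fun _ => 0) &
    (fun k => F x k - alpha * x k) = (fun _ => 0)].

End CStar.

(* If F x = alpha x with x <> 0 in H_A, put s = <x, x>.  Self-adjointness gives
   alpha^* s = <F x, x> = <x, F x> = alpha s, so with delta = alpha^* - alpha the
   vector delta x has <delta x, delta x> = delta^* delta s = 0.  Hence delta x = 0,
   i.e. x is an eigenvector for alpha^* as well.
   The analytic input is that <y, y> = 0 forces y = 0, i.e. the monotonicity
   ||y_j^* y_j|| <= ||sum_k y_k^* y_k|| of the norm on sums of positive elements.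
   Positivity is handled through self-adjoint square roots, which are obtained as
   limits of the contraction T |-> (X + T^2) / 2 in the complete algebra. *)

From mathcomp Require Import all_boot all_order all_algebra.
From mathcomp Require Import complex reals ring lra.
From Stdlib Require Import ClassicalEpsilon FunctionalExtensionality.
Import Order.TTheory GRing.Theory Num.Theory.
Local Open Scope ring_scope.

Set Implicit Arguments.
Unset Strict Implicit.
Unset Printing Implicit Defensive.

Lemma bernoulli_ineq (R : realDomainType) (h : R) n :
  0 <= h -> 1 + n%:R * h <= (1 + h) ^+ n.
Proof.
move=> h0; elim: n => [|n IH]; first by rewrite mul0r addr0 expr0.
rewrite exprS -natr1.
have nh0 : 0 <= n%:R * h by rewrite mulr_ge0.
have nhh0 : 0 <= n%:R * h * h by rewrite mulr_ge0.
nra.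
Qed.

Lemma exists_exprn_lt (R : archiRealFieldType) (r e : R) :
  0 < r -> r < 1 -> 0 < e -> exists N, r ^+ N < e.
Proof.
move=> r0 r1 e0; set h := r^-1 - 1.
have h0 : 0 < h by rewrite subr_gt0 invf_gt1.
set N := Num.Def.archi_bound (e * h)^-1.
have NehP : 1 < N%:R * (e * h).
  rewrite -ltr_pdivrMr ?mulr_gt0 // div1r.
  by apply: archi_boundP; rewrite invr_ge0 ltW ?mulr_gt0.
have rN0 : 0 < r ^+ N by rewrite exprn_gt0.
have rNB : r ^+ N * (1 + N%:R * h) <= 1.
  have := ler_wpM2l (ltW rN0) (bernoulli_ineq N (ltW h0)).
  by rewrite [1 + h]addrC subrK exprVn mulfV // gt_eqF.
exists N; rewrite ltNge; apply/negP => erN.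
have : e * (N%:R * h) <= r ^+ N * (N%:R * h) by rewrite ler_wpM2r // mulr_ge0 // ltW.
nra.
Qed.

Section CStarAlgebra.
Variables (R : realType) (A : comAlgType R[i]) (nrm : A -> R) (star : A -> A).
Hypothesis HA : is_CStar nrm star.

Definition cst : {rmorphism R -> A} := in_alg A \o real_complex R.

Local Notation iA := (('i%C : R[i])%:A : A).

Lemma cst_splitr x : x = cst (2^-1) * x + cst (2^-1) * x.
Proof. by rewrite -mulrDl -rmorphD -[2^-1]mul1r -splitr rmorph1 mul1r. Qed.

Lemma iA_sqr : iA * iA = -1.
Proof. by rewrite mulr_algl scalerA -expr2 sqr_i scaleN1r. Qed.

Lemma star0 : star 0 = 0.
Proof. by move: (star_scale HA 0 0); rewrite conjc0 !scale0r. Qed.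

Lemma starN x : star (- x) = - star x.
Proof. by rewrite -scaleN1r (star_scale HA) rmorphN1 scaleN1r. Qed.

Lemma starB x y : star (x - y) = star x - star y.
Proof. by rewrite (star_add HA) starN. Qed.

Lemma star1 : star 1 = 1.
Proof.
by move: (star_mul HA (star 1) 1); rewrite mulr1 (star_invol HA) mulr1 => /esym.
Qed.

Lemma star_cst r : star (cst r) = cst r.
Proof. by rewrite /= (star_scale HA) conjc_real star1. Qed.

Lemma star_iA : star iA = - iA.
Proof.
rewrite (star_scale HA) star1 -scaleNr; congr (_ *: _).
by apply/eqP; rewrite eq_complex /= oppr0 !eqxx.
Qed.

Lemma nrm0 : nrm 0 = 0.
Proof. by move: (nrm_scale HA 0 0); rewrite scale0r Normc.normc0 mul0r. Qed.

Lemma nrmN x : nrm (- x) = nrm x.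
Proof. by rewrite -scaleN1r (nrm_scale HA) normcN Normc.normc1 mul1r. Qed.

Lemma nrm_distC x y : nrm (x - y) = nrm (y - x).
Proof. by rewrite -opprB nrmN. Qed.

Lemma nrm_distD x y z : nrm (x - z) <= nrm (x - y) + nrm (y - z).
Proof. by rewrite -[x - z](subrKA y) (nrm_triangle HA). Qed.

Lemma nrm_gt0 x : x != 0 -> 0 < nrm x.
Proof.
by move=> x0; rewrite lt_def (nrm_ge0 HA) andbT; apply: contra x0 => /eqP/(nrm_eq0 HA)->.
Qed.

Lemma nrm_star x : nrm (star x) = nrm x.
Proof.
suff le_star y : nrm y <= nrm (star y).
  by apply/eqP; rewrite eq_le le_star -{2}(star_invol HA x) le_star.
have [->|y0] := eqVneq y 0; first by rewrite star0.
rewrite -(ler_pM2r (nrm_gt0 y0)) -expr2 -(cstar_identity HA).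
exact: (nrm_submul HA).
Qed.

Lemma nrm1 : nrm 1 = 1.
Proof.
have n1 : 0 < nrm (1 : A) by rewrite nrm_gt0 ?oner_eq0.
apply: (mulIf (lt0r_neq0 n1)).
by rewrite mul1r -expr2 -(cstar_identity HA) star1 mulr1.
Qed.

Lemma nrm_cstM r x : nrm (cst r * x) = `|r| * nrm x.
Proof. by rewrite /= mulr_algl (nrm_scale HA) /= expr0n /= addr0 sqrtr_sqr. Qed.

Lemma nrm_cst r : nrm (cst r) = `|r|.
Proof. by rewrite -[cst r]mulr1 nrm_cstM nrm1 mulr1. Qed.

Lemma nrm_sqr u : star u = u -> nrm (u * u) = nrm u ^+ 2.
Proof. by move=> su; rewrite -{1}su (cstar_identity HA). Qed.

Lemma conv_uniq u l1 l2 : conv nrm u l1 -> conv nrm u l2 -> l1 = l2.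
Proof.
move=> h1 h2; apply/eqP; rewrite -subr_eq0; apply/eqP/(nrm_eq0 HA)/eqP.
rewrite eq_le (nrm_ge0 HA) andbT.
apply/ler_addgt0Pr => e e0; rewrite add0r.
have e2 : 0 < e / 2 by rewrite divr_gt0.
have [N1 HN1] := h1 _ e2; have [N2 HN2] := h2 _ e2; set n := maxn N1 N2.
apply: (le_trans (nrm_distD _ (u n) _)); rewrite nrm_distC.
have := HN1 n (leq_maxl _ _); have := HN2 n (leq_maxr _ _); lra.
Qed.

Lemma conv_ext u v l : conv nrm u l -> u =1 v -> conv nrm v l.
Proof. by move=> h uv e /h [N HN]; exists N => n /HN; rewrite uv. Qed.

Lemma conv_shift u l : conv nrm u l -> conv nrm (fun n => u n.+1) l.
Proof. by move=> h e /h [N HN]; exists N => n Nn; apply/HN/leqW. Qed.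

Lemma conv_addl c u l : conv nrm u l -> conv nrm (fun n => c + u n) (c + l).
Proof. by move=> h e /h [N HN]; exists N => n /HN; rewrite opprD addrACA subrr add0r. Qed.

Lemma conv_mull c u l : conv nrm u l -> conv nrm (fun n => c * u n) (c * l).
Proof.
move=> h e e0; set K := nrm c + 1.
have K0 : 0 < K by rewrite ltr_wpDl ?(nrm_ge0 HA).
have [N HN] := h _ (divr_gt0 e0 K0); exists N => n /HN ulK.
rewrite -mulrBr; apply: (le_lt_trans (nrm_submul HA _ _)).
move: ulK; rewrite ltr_pdivlMr // mulrC; apply: le_lt_trans.
by apply: ler_wpM2r; [exact: (nrm_ge0 HA) | rewrite lerDl].
Qed.

Lemma conv_star u l : conv nrm u l -> conv nrm (fun n => star (u n)) (star l).
Proof. by move=> h e /h [N HN]; exists N => n /HN; rewrite -starB nrm_star. Qed.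

Lemma conv_sqr u l B : (forall n, nrm (u n) <= B) ->
  conv nrm u l -> conv nrm (fun n => u n * u n) (l * l).
Proof.
move=> uB h e e0; set K := B + nrm l + 1.
have B0 : 0 <= B by apply: le_trans (uB 0%N); apply: (nrm_ge0 HA).
have K0 : 0 < K by rewrite ltr_wpDl // addr_ge0 // (nrm_ge0 HA).
have [N HN] := h _ (divr_gt0 e0 K0); exists N => n /HN ulK.
have -> : u n * u n - l * l = (u n - l) * (u n + l) by ring.
apply: (le_lt_trans (nrm_submul HA _ _)).
have ulB : nrm (u n + l) <= K.
  by apply: (le_trans (nrm_triangle HA _ _)); have := uB n; rewrite /K; lra.
apply: (le_lt_trans (ler_wpM2l (nrm_ge0 HA _) ulB)).
by rewrite -ltr_pdivlMr.
Qed.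

Section Contraction.
Variables (u : nat -> A) (rho : R).
Hypotheses (rho0 : 0 < rho) (rho1 : rho < 1).
Hypothesis u_contract : forall n, nrm (u n.+2 - u n.+1) <= rho * nrm (u n.+1 - u n).

Lemma contraction_dist_le n k :
  nrm (u (n + k)%N - u n) <= nrm (u 1%N - u 0%N) / (1 - rho) * rho ^+ n.
Proof.
set c := nrm (u 1%N - u 0%N); have c0 : 0 <= c by exact: (nrm_ge0 HA).
have rho1' : 1 - rho != 0 by rewrite subr_eq0 gt_eqF.
have step m : nrm (u m.+1 - u m) <= c * rho ^+ m.
  elim: m => [|m IH]; first by rewrite expr0 mulr1.
  by apply: (le_trans (u_contract m)); rewrite exprS mulrCA ler_wpM2l // ltW.
have tail : nrm (u (n + k)%N - u n) <= c / (1 - rho) * (rho ^+ n - rho ^+ (n + k)).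
  elim: k => [|k IH]; first by rewrite addn0 !subrr nrm0 mulr0.
  apply: (le_trans (nrm_distD _ (u (n + k)%N) _)); rewrite addnS.
  have -> : c / (1 - rho) * (rho ^+ n - rho ^+ (n + k).+1)
      = c * rho ^+ (n + k) + c / (1 - rho) * (rho ^+ n - rho ^+ (n + k)).
    by rewrite exprS; field.
  exact: lerD (step _) IH.
apply: (le_trans tail); apply: ler_wpM2l; first by rewrite divr_ge0 // subr_ge0 ltW.
by rewrite gerBl exprn_ge0 // ltW.
Qed.

Lemma contraction_cauchy : cauchy nrm u.
Proof.
move=> e e0; set K := nrm (u 1%N - u 0%N) / (1 - rho) + 1.
have K0 : 0 < K by rewrite ltr_wpDl ?divr_ge0 ?subr_ge0 ?(nrm_ge0 HA) ?ltW.
have [N rhoN] := exists_exprn_lt rho0 rho1 (divr_gt0 e0 K0).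
have dist_lt n k : (N <= n)%N -> nrm (u (n + k)%N - u n) < e.
  move=> Nn; apply: (le_lt_trans (contraction_dist_le n k)).
  have rhonN : rho ^+ n <= rho ^+ N by rewrite ler_wiXn2l // ltW.
  rewrite ltr_pdivlMr // mulrC in rhoN; apply: le_lt_trans rhoN.
  apply: ler_pM => //; last by rewrite lerDl.
    by rewrite divr_ge0 ?(nrm_ge0 HA) // subr_ge0 ltW.
  by rewrite exprn_ge0 // ltW.
exists N => m n Nm Nn; have [nm|mn] := leqP n m.
  by rewrite -(subnKC nm); apply: dist_lt.
by rewrite nrm_distC -(subnKC (ltnW mn)); apply: dist_lt.
Qed.

End Contraction.

(* The limit l of this iteration satisfies 2 l = X + l^2, i.e. (1 - l)^2 = 1 - X;
   on the ball of radius (1 + ||X||) / 2 the map is a contraction of that ratio. *)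
Fixpoint sqrt_iter (X : A) (n : nat) : A :=
  if n is m.+1 then cst (2^-1) * (X + sqrt_iter X m * sqrt_iter X m) else 0.

Section SqrtIteration.
Variable X : A.
Hypotheses (sX : star X = X) (nX : nrm X < 1).

Local Notation T := (sqrt_iter X).
Local Notation rho := ((1 + nrm X) / 2).

Lemma sqrt_iterS n : T n.+1 = cst (2^-1) * (X + T n * T n).
Proof. by []. Qed.

Lemma sqrt_iter_sa n : star (T n) = T n.
Proof.
elim: n => [|n IH] /=; first exact: star0.
by rewrite (star_mul HA) star_cst (star_add HA) (star_mul HA) IH sX mulrC.
Qed.

Lemma nrm_sqrt_iter_le n : nrm (T n) <= rho.
Proof.
have X0 := nrm_ge0 HA X.
elim: n => [|n IH] /=; first by rewrite nrm0 divr_ge0 // addr_ge0.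
rewrite nrm_cstM gtr0_norm ?invr_gt0 //.
have TT : nrm (T n * T n) <= rho * rho.
  by apply: (le_trans (nrm_submul HA _ _)); apply: ler_pM; rewrite ?(nrm_ge0 HA).
have rho_sqr : rho * rho <= 1 by apply: mulr_ile1; move: nX; lra.
have := nrm_triangle HA X (T n * T n); lra.
Qed.

Lemma sqrt_iter_contract n : nrm (T n.+2 - T n.+1) <= rho * nrm (T n.+1 - T n).
Proof.
have -> : T n.+2 - T n.+1 = cst (2^-1) * ((T n.+1 - T n) * (T n.+1 + T n)).
  by rewrite !sqrt_iterS; ring.
rewrite nrm_cstM gtr0_norm ?invr_gt0 //.
have sum_le : nrm (T n.+1 + T n) <= rho + rho.
  apply: (le_trans (nrm_triangle HA _ _)).
  exact: lerD (nrm_sqrt_iter_le n.+1) (nrm_sqrt_iter_le n).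
have := ler_wpM2l (nrm_ge0 HA (T n.+1 - T n)) sum_le.
have := nrm_submul HA (T n.+1 - T n) (T n.+1 + T n); lra.
Qed.

Lemma sqrt_one_sub : exists y, star y = y /\ y * y = 1 - X.
Proof.
have X0 := nrm_ge0 HA X.
have [rho0 rho1] : 0 < rho /\ rho < 1 by move: (nX) => nX1; split; lra.
have [l Tl] := nrm_complete HA (contraction_cauchy rho0 rho1 sqrt_iter_contract).
have l_fix : l = cst (2^-1) * (X + l * l).
  apply: (conv_uniq (conv_shift Tl)).
  exact/conv_mull/conv_addl/(conv_sqr nrm_sqrt_iter_le).
have sl : star l = l.
  apply: (conv_uniq _ Tl); apply: (conv_ext (conv_star Tl)) => n.
  exact: sqrt_iter_sa.
exists (1 - l); split; first by rewrite starB star1 sl.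
have ll : l + l = X + l * l.
  by rewrite {1 2}l_fix -cst_splitr.
have -> : (1 - l) * (1 - l) = 1 - (l + l) + l * l by ring.
by rewrite ll opprD addrA subrK.
Qed.

End SqrtIteration.

Lemma sa_sqrt_near_cst Y mu : star Y = Y -> 0 < mu -> nrm (cst mu - Y) < mu ->
  exists m, star m = m /\ m * m = Y.
Proof.
move=> sY mu0 muY; set X := cst mu^-1 * (cst mu - Y).
have sX : star X = X by rewrite (star_mul HA) starB !star_cst sY mulrC.
have nX : nrm X < 1.
  by rewrite nrm_cstM gtr0_norm ?invr_gt0 // ltr_pdivrMl // mulr1.
have [y [sy yy]] := sqrt_one_sub sX nX.
exists (cst (Num.sqrt mu) * y); split; first by rewrite (star_mul HA) sy star_cst mulrC.
have -> : cst (Num.sqrt mu) * y * (cst (Num.sqrt mu) * y)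
    = cst (Num.sqrt mu ^+ 2) * (y * y) by rewrite rmorphXn; ring.
rewrite sqr_sqrtr ?ltW // yy /X mulrBr mulrA -!rmorphM mulfV ?gt_eqF //.
by rewrite rmorph1 mul1r mulr1 subKr.
Qed.

Lemma nrm_le_add_sqr u a : star u = u -> star a = a ->
  nrm u ^+ 2 <= nrm (u * u + a * a).
Proof.
(* z = u + i a has z^* z = u^2 + a^2 by commutativity, and 2 u = z + z^*. *)
move=> su sa; set z := u + iA * a.
have sz : star z = u - iA * a.
  by rewrite (star_add HA) (star_mul HA) star_iA su sa mulrN mulrC.
have -> : u * u + a * a = star z * z.
  suff -> : star z * z = u * u - (iA * iA) * (a * a) by rewrite iA_sqr mulN1r opprK.
  by rewrite sz /z; move: iA => j; ring.
rewrite (cstar_identity HA) lerXn2r ?nnegrE ?(nrm_ge0 HA) //.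
have -> : u = cst (2^-1) * (z + star z).
  by rewrite sz /z addrACA subrr addr0 mulrDr -cst_splitr.
rewrite nrm_cstM gtr0_norm ?invr_gt0 //.
have := nrm_triangle HA z (star z); rewrite nrm_star; lra.
Qed.

Lemma sa_sqrt_add_sqr a k d : star a = a -> star k = k -> 0 < d ->
  exists m, star m = m /\ m * m = a * a + k * k + cst d.
Proof.
(* Square roots v of lam - k^2 and u of lam - a^2 - k^2 exist; comparing
   u^2 + a^2 = v^2 and v^2 + k^2 = lam bounds ||lam - a^2 - k^2|| by lam. *)
move=> sa sk d0; set lam := nrm a ^+ 2 + nrm k ^+ 2 + 1.
have lam0 : 0 < lam by rewrite ltr_wpDl // addr_ge0 // exprn_ge0 // (nrm_ge0 HA).
have [v [sv vv]] : exists v, star v = v /\ v * v = cst lam - k * k.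
  apply: (sa_sqrt_near_cst (mu := lam)) => //.
    by rewrite starB star_cst (star_mul HA) sk.
  rewrite subKr nrm_sqr // /lam; have := nrm_ge0 HA a; nra.
have [u [su uu]] : exists u, star u = u /\ u * u = cst lam - (a * a + k * k).
  apply: (sa_sqrt_near_cst (mu := lam)) => //.
    by rewrite starB star_cst (star_add HA) !(star_mul HA) sa sk.
  rewrite subKr; apply: (le_lt_trans (nrm_triangle HA _ _)).
  by rewrite !nrm_sqr // /lam ltrDl.
have nv : nrm v ^+ 2 <= lam.
  by have := nrm_le_add_sqr sv sk; rewrite vv subrK nrm_cst gtr0_norm.
have nu : nrm (u * u) <= lam.
  apply: le_trans nv; rewrite -nrm_sqr //.
  have -> : v * v = u * u + a * a by rewrite uu vv; ring.
  by rewrite nrm_sqr //; apply: nrm_le_add_sqr.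
apply: (sa_sqrt_near_cst (mu := lam + d)).
- by rewrite !(star_add HA) !(star_mul HA) star_cst sa sk.
- by rewrite addr_gt0.
- have -> : cst (lam + d) - (a * a + k * k + cst d) = u * u by rewrite uu rmorphD; ring.
  by apply: (le_lt_trans nu); rewrite ltrDl.
Qed.

(* Stands for [0 <= p]: in a C*-algebra, p is positive iff every p + d with
   d > 0 is the square of a self-adjoint element. *)
Definition positive (p : A) : Prop :=
  forall d : R, 0 < d -> exists m, star m = m /\ m * m = p + cst d.

Lemma positive0 : positive 0.
Proof.
move=> d d0; exists (cst (Num.sqrt d)); split; first exact: star_cst.
by rewrite -rmorphM -expr2 sqr_sqrtr ?ltW // add0r.
Qed.

Lemma positiveD p q : positive p -> positive q -> positive (p + q).
Proof.
move=> pp pq d d0; have d3 : 0 < d / 3 by rewrite divr_gt0.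
have [m [sm mm]] := pp _ d3; have [n [sn nn]] := pq _ d3.
have [r [sr rr]] := sa_sqrt_add_sqr sm sn d3.
exists r; split => //; rewrite rr mm nn.
have d_split : d = d / 3 + d / 3 + d / 3 by field.
by rewrite [in RHS]d_split !rmorphD; ring.
Qed.

Lemma positive_starM w : positive (star w * w).
Proof.
(* w^* w = a^2 + b^2 for the real and imaginary parts a, b of w. *)
set a := cst (2^-1) * (w + star w); set b := cst (2^-1) * (iA * (star w - w)).
have sa : star a = a.
  by rewrite (star_mul HA) star_cst (star_add HA) (star_invol HA) addrC mulrC.
have sb : star b = b.
  rewrite (star_mul HA) star_cst (star_mul HA) star_iA starB (star_invol HA) mulrC.
  by rewrite /b; move: iA => j; ring.
have -> : star w * w = a * a + b * b.
  have h4 : (2^-1 * 2^-1 * 4%:R : R) = 1 by field.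
  rewrite -[star w * w]mul1r -(rmorph1 cst) -h4 !rmorphM rmorph_nat /a /b.
  move: iA iA_sqr => j jj.
  transitivity (cst (2^-1) * cst (2^-1) *
    ((w + star w) * (w + star w) + j * j * ((star w - w) * (star w - w)))); last by ring.
  by rewrite jj; ring.
by move=> d; apply: sa_sqrt_add_sqr.
Qed.

Lemma nrm_le_positiveD p q : positive p -> positive q -> nrm p <= nrm (p + q).
Proof.
move=> pp pq; apply/ler_addgt0Pr => e e0; have e3 : 0 < e / 3 by rewrite divr_gt0.
have [m [sm mm]] := pp _ e3; have [n [sn nn]] := pq _ e3.
have pm : nrm p <= nrm m ^+ 2 + e / 3.
  have -> : p = m * m - cst (e / 3) by rewrite mm addrK.
  apply: (le_trans (nrm_triangle HA _ _)).
  by rewrite nrmN nrm_cst gtr0_norm // nrm_sqr.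
have mpq : nrm m ^+ 2 <= nrm (p + q) + (e / 3 + e / 3).
  apply: (le_trans (nrm_le_add_sqr sm sn)); rewrite mm nn.
  have -> : p + cst (e / 3) + (q + cst (e / 3)) = p + q + cst (e / 3 + e / 3).
    by rewrite rmorphD; ring.
  apply: (le_trans (nrm_triangle HA _ _)).
  by rewrite nrm_cst gtr0_norm ?addr_gt0.
lra.
Qed.

Lemma sum_starM_cvg0_eq0 (y : nat -> A) j :
  conv nrm (fun n => \sum_(k < n) star (y k) * y k) 0 -> y j = 0.
Proof.
move=> lim0; set w := star (y j) * y j.
have w_le n : (j < n)%N -> nrm w <= nrm (\sum_(k < n) star (y k) * y k).
  move=> jn; rewrite (bigD1 (Ordinal jn)) //=.
  apply: nrm_le_positiveD; first exact: positive_starM.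
  apply: big_ind => [|p q|k _];
    [exact: positive0 | exact: positiveD | exact: positive_starM].
have w0 : nrm w = 0.
  apply/eqP; rewrite eq_le (nrm_ge0 HA) andbT; apply/ler_addgt0Pr => e e0.
  have [N HN] := lim0 _ e0; set n := maxn N j.+1.
  apply: (le_trans (w_le n (leq_maxr _ _))); rewrite add0r.
  by have := HN n (leq_maxl _ _); rewrite subr0 => /ltW.
by apply/(nrm_eq0 HA)/eqP; rewrite -sqrf_eq0 -(cstar_identity HA) w0.
Qed.

Lemma ip_lim (u v : nat -> A) l :
  conv nrm (fun n => \sum_(k < n) star (u k) * v k) l -> ip nrm star u v = l.
Proof. by move=> h; apply: (conv_uniq _ h); apply: epsilon_spec; exists l. Qed.

Lemma selfadjoint_eigen_star (F : (nat -> A) -> nat -> A) x alpha :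
  is_selfadjoint nrm star F -> is_l2 nrm star x ->
  F x = (fun k => alpha * x k) -> F x = (fun k => star alpha * x k).
Proof.
move=> Fsa lx Fx; have [s xs] := lx.
have ip_Fx_x : ip nrm star (F x) x = star alpha * s.
  rewrite Fx; apply: ip_lim; apply: (conv_ext (conv_mull (star alpha) xs)) => n.
  by rewrite mulr_sumr; apply: eq_bigr => k _; rewrite (star_mul HA); ring.
have ip_x_Fx : ip nrm star x (F x) = alpha * s.
  rewrite Fx; apply: ip_lim; apply: (conv_ext (conv_mull alpha xs)) => n.
  by rewrite mulr_sumr; apply: eq_bigr => k _; rewrite mulrCA.
set delta := star alpha - alpha.
have ds : delta * s = 0 by rewrite mulrBl -ip_Fx_x -ip_x_Fx Fsa ?subrr.
have lim0 : conv nrm (fun n => \sum_(k < n) star (delta * x k) * (delta * x k)) 0.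
  have := conv_mull (star delta * delta) xs; rewrite -mulrA ds mulr0 => lim.
  apply: (conv_ext lim) => n; rewrite mulr_sumr; apply: eq_bigr => k _.
  by rewrite (star_mul HA); ring.
rewrite Fx; apply: functional_extensionality => k; apply/esym/eqP.
rewrite -subr_eq0 -mulrBl; apply/eqP.
exact: (@sum_starM_cvg0_eq0 (fun i => delta * x i) k lim0).
Qed.

Lemma selfadjoint_sigma_p_star (F : (nat -> A) -> nat -> A) alpha :
  is_selfadjoint nrm star F ->
  in_sigma_p nrm star F alpha -> in_sigma_p nrm star F (star alpha).
Proof.
move=> Fsa [x [lx x0 ker]]; exists x; split => //.
have Fx : F x = (fun k => alpha * x k).
  apply: functional_extensionality => k; apply/eqP.
  by rewrite -subr_eq0; have /= -> := congr1 (@^~ k) ker.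
rewrite (selfadjoint_eigen_star Fsa lx Fx).
by apply: functional_extensionality => k; rewrite subrr.
Qed.

End CStarAlgebra.

Theorem lemma2p13 (R : realType) (A : comAlgType R[i])
    (nrm : A -> R) (star : A -> A) (HA : is_CStar nrm star)
    (F : (nat -> A) -> (nat -> A))
    (HF : is_Ba nrm star F) (Hsa : is_selfadjoint nrm star F) :
  forall alpha : A,
    in_sigma_p nrm star F alpha <-> in_sigma_p nrm star F (star alpha).
Proof.
move=> alpha; split; first exact: selfadjoint_sigma_p_star.
by rewrite -{2}(star_invol HA alpha); apply: selfadjoint_sigma_p_star.
Qed.
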